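(* Let $M$ be an $n\times n$ exceptional extremal copositive matrix that has exactly $n$ representative minimal zeros $\mathbf w_1,\dots,\mathbf w_n$, and let $W=[\mathbf w_1\ \mathbf w_2\ \cdots\ \mathbf w_n]$. Then every completely positive $n\times n$ matrix $A$ with $\operatorname{trace}(AM)=0$ has the form $A=WCW^T$ for some $n\times n$ completely positive matrix $C$, with $\operatorname{cp\text{-}rank}A=\operatorname{cp\text{-}rank}C$, and the number of CP factorizations (respectively, minimal CP factorizations) of $A$ equals the number of CP factorizations (respectively, minimal CP factorizations) of $C$.
   Context: A symmetric $n\times n$ matrix $A$ is completely positive if $A=BB^T$ for some entrywise nonnegative $n\times k$ matrix $B$; such an equality is a CP factorization of $A$. Only CP factorizations in which the columns of $B$ are pairwise linearly independent are considered, and two CP factorizations $A=BB^T=CC^T$ are considered equal if $C=BP$ for a permutation matrix $P$. The cp-rank of $A$ is the minimal number of columns of such a nonnegative $B$; a CP factorization with that many columns is called minimal. A symmetric matrix $M$ is copositive if $\mathbf x^TM\mathbf x\ge0$ for all $\mathbf x\in\mathbb R^n_+$; $\mathcal{COP}_n$ denotes the cone of such matrices, which is the dual of the completely positive cone under $\langle X,Y\rangle=\operatorname{trace}(XY)$. A copositive $M$ is exceptional if it is not the sum of a positive semidefinite matrix and a symmetric entrywise nonnegative matrix, and extremal if it generates an extreme ray of $\mathcal{COP}_n$. A zero of $M$ is a nonzero $\mathbf b\in\mathbb R^n_+$ with $\mathbf b^TM\mathbf b=0$; it is a minimal zero if its support does not strictly contain the support of another zero. A set of minimal zeros is representative if every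 minimal zero of $M$ is a positive scalar multiple of exactly one vector in the set. Known facts (Hildebrand), which may be used: every zero of a copositive $M$ is a nonnegative combination of finitely many minimal zeros, and an exceptional extremal copositive matrix in $\mathcal{COP}_n$ has at least $n$ representative minimal zeros, and these span $\mathbb R^n$. *)

From HB Require Import structures.
From mathcomp Require Import all_boot all_order all_algebra.
From mathcomp Require Import reals.
Set Implicit Arguments. Unset Strict Implicit. Unset Printing Implicit Defensive.
Import Order.TTheory GRing.Theory Num.Theory.
Local Open Scope ring_scope.

Section Defs.
Variable R : realType.

Definition nonneg_mx m k (B : 'M[R]_(m, k)) : Prop := forall i j, 0 <= B i j.

Definition sym_mx n (M : 'M[R]_n) : Prop := M^T = M.

Definition qform n (M : 'M[R]_n) (x : 'cV[R]_n) : R := (x^T *m M *m x) 0 0.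

Definition copositive n (M : 'M[R]_n) : Prop :=
  sym_mx M /\ forall x : 'cV[R]_n, nonneg_mx x -> 0 <= qform M x.

Definition psd n (P : 'M[R]_n) : Prop :=
  sym_mx P /\ forall x : 'cV[R]_n, 0 <= qform P x.

Definition exceptional n (M : 'M[R]_n) : Prop :=
  copositive M /\
  ~ (exists P N : 'M[R]_n, psd P /\ sym_mx N /\ nonneg_mx N /\ M = P + N).

Definition extremal n (M : 'M[R]_n) : Prop :=
  copositive M /\ M != 0 /\
  forall M1 M2 : 'M[R]_n, copositive M1 -> copositive M2 -> M = M1 + M2 ->
    exists a b : R, 0 <= a /\ 0 <= b /\ M1 = a *: M /\ M2 = b *: M.

Definition supp n (x : 'cV[R]_n) : {set 'I_n} := [set i | x i 0 != 0].

Definition is_zero n (M : 'M[R]_n) (x : 'cV[R]_n) : Prop :=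
  nonneg_mx x /\ x != 0 /\ qform M x = 0.

Definition minimal_zero n (M : 'M[R]_n) (x : 'cV[R]_n) : Prop :=
  is_zero M x /\ ~ (exists y, is_zero M y /\ supp y \proper supp x).

Definition representative_zeros n (M W : 'M[R]_n) : Prop :=
  (forall i, minimal_zero M (col i W)) /\
  forall u, minimal_zero M u ->
    exists! i : 'I_n, exists c : R, 0 < c /\ u = c *: col i W.

Definition completely_positive n (A : 'M[R]_n) : Prop :=
  exists k (B : 'M[R]_(n, k)), nonneg_mx B /\ A = B *m B^T.

Definition is_cp_rank n (A : 'M[R]_n) (r : nat) : Prop :=
  (exists B : 'M[R]_(n, r), nonneg_mx B /\ A = B *m B^T) /\
  forall k (B : 'M[R]_(n, k)), nonneg_mx B -> A = B *m B^T -> (r <= k)%N.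

Definition factor n := {k : nat & 'M[R]_(n, k)}.

Definition pairwise_lin_indep n k (B : 'M[R]_(n, k)) : Prop :=
  forall j1 j2 : 'I_k, j1 != j2 -> forall a b : R,
    a *: col j1 B + b *: col j2 B = 0 -> a = 0 /\ b = 0.

Definition cp_fact n (A : 'M[R]_n) (F : factor n) : Prop :=
  nonneg_mx (projT2 F) /\ pairwise_lin_indep (projT2 F) /\
  A = projT2 F *m (projT2 F)^T.

Definition min_cp_fact n (A : 'M[R]_n) (F : factor n) : Prop :=
  cp_fact A F /\ is_cp_rank A (projT1 F).

Definition fact_eq n (F G : factor n) : Prop :=
  exists f : 'I_(projT1 F) -> 'I_(projT1 G),
    bijective f /\ forall i j, projT2 G i (f j) = projT2 F i j.

(* the sets of factorizations satisfying P and Q, modulo fact_eq,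
   have the same cardinality (a bijection between the classes) *)
Definition same_number n (P Q : factor n -> Prop) : Prop :=
  exists T : factor n -> factor n,
    (forall F, P F -> Q (T F)) /\
    (forall F G, P F -> P G -> (fact_eq (T F) (T G) <-> fact_eq F G)) /\
    (forall G, Q G -> exists F, P F /\ fact_eq (T F) G).

End Defs.

From Pilot Require Import Defs.
From HB Require Import structures.
From mathcomp Require Import all_boot all_order all_algebra.
From mathcomp Require Import reals.
From mathcomp Require Import classical_sets boolp topology normedtype derive.
From mathcomp Require Import ring lra.
Import Order.TTheory GRing.Theory Num.Theory.
Import numFieldNormedType.Exports.
Set Implicit Arguments. Unset Strict Implicit. Unset Printing Implicit Defensive.
Local Open Scope ring_scope.

(* 1. Every zero of a copositive M is a nonnegative combination of minimal
      zeros (zero_in_cone): a non-minimal zero u contains the support of a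
      zero y, and subtracting from u the largest multiple of y that keeps it
      nonnegative leaves a zero of strictly smaller support (zero_descent).
   2. W is invertible (representative_zeros_unit).  Otherwise some h <> 0 has
      h^T W = 0, so h^T vanishes on every zero by part 1.  Induction over the
      faces of R^n_+, with a compactness argument on faces free of zeros,
      shows that e (h^T y)^2 <= y^T M y on R^n_+ for some e > 0
      (zero_form_bound).  Then M = (M - e h h^T) + e h h^T splits M into
      copositive summands, and extremality makes M a multiple of h h^T,
      i.e. positive semidefinite, which contradicts exceptionality.
   3. If tr(A M) = 0 and A = B B^T with B >= 0, each column of B is a zero of
      M, so W^-1 B >= 0 (zero_factor_nonneg).  Hence B |-> W^-1 B and
      K |-> W K are mutually inverse maps between the nonnegative factors of
      A and of C = W^-1 A W^-T preserving the number of columns; they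
      transfer the cp-rank and the (minimal) CP factorizations (CPTransfer). *)

Section QuadraticForms.
Variables (R : realType) (n : nat).
Implicit Types (M : 'M[R]_n) (h x y z : 'cV[R]_n).

Definition bil M x y : R := (x^T *m M *m y) 0 0.

Definition lform h y : R := (h^T *m y) 0 0.

Lemma bilE M x y : bil M x y = \sum_j \sum_i x i 0 * M i j * y j 0.
Proof.
rewrite /bil mxE; apply: eq_bigr => j _; rewrite mxE big_distrl /=.
by apply: eq_bigr => i _; rewrite mxE.
Qed.

Lemma qformE M x : qform M x = bil M x x.
Proof. by []. Qed.

Lemma bilDl M x y z : bil M (x + y) z = bil M x z + bil M y z.
Proof. by rewrite /bil linearD /= !mulmxDl mxE. Qed.

Lemma bilDr M x y z : bil M z (x + y) = bil M z x + bil M z y.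
Proof. by rewrite /bil mulmxDr mxE. Qed.

Lemma bilZl M a x y : bil M (a *: x) y = a * bil M x y.
Proof. by rewrite /bil linearZ /= -!scalemxAl mxE. Qed.

Lemma bilZr M a x y : bil M x (a *: y) = a * bil M x y.
Proof. by rewrite /bil -scalemxAr mxE. Qed.

Lemma bil_sym M x y : sym_mx M -> bil M x y = bil M y x.
Proof.
move=> sM; rewrite /bil.
transitivity ((x^T *m M *m y)^T 0 0); first by rewrite [RHS]mxE.
by rewrite !trmx_mul trmxK sM mulmxA.
Qed.

Lemma bilMx M x y : sym_mx M -> bil M x y = \sum_j (M *m x) j 0 * y j 0.
Proof.
move=> sM; rewrite bil_sym // /bil -mulmxA mxE.
apply: eq_bigr => j _; rewrite mulrC; congr (_ * _).
by rewrite mxE.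
Qed.

Lemma qform_expand M x z t : sym_mx M ->
  qform M (z + t *: x) = qform M z + 2 * t * bil M x z + t ^+ 2 * qform M x.
Proof.
move=> sM; rewrite !qformE bilDl !bilDr !bilZl !bilZr (bil_sym x z sM).
ring.
Qed.

Lemma qformZ M a x : qform M (a *: x) = a ^+ 2 * qform M x.
Proof. by rewrite !qformE bilZl bilZr mulrA expr2. Qed.

Lemma qformD M1 M2 x : qform (M1 + M2) x = qform M1 x + qform M2 x.
Proof. by rewrite /qform mulmxDr mulmxDl mxE. Qed.

Lemma qformZm a M x : qform (a *: M) x = a * qform M x.
Proof. by rewrite /qform -scalemxAr -scalemxAl mxE. Qed.

Lemma qformN M x : qform (- M) x = - qform M x.
Proof. by rewrite -scaleN1r qformZm mulN1r. Qed.

Lemma deltaE (j k : 'I_n) : (delta_mx j 0 : 'cV[R]_n) k 0 = (k == j)%:R.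
Proof. by rewrite mxE eqxx andbT. Qed.

Lemma bil_delta M x j : sym_mx M -> bil M x (delta_mx j 0) = (M *m x) j 0.
Proof.
move=> sM; rewrite bilMx // (bigD1 j) //= big1 ?addr0.
  by rewrite deltaE eqxx mulr1.
by move=> k kj; rewrite deltaE (negbTE kj) mulr0.
Qed.

Lemma qform_delta M j : qform M (delta_mx j 0) = M j j.
Proof.
rewrite qformE bilE (bigD1 j) //= [X in _ + X]big1 ?addr0.
  rewrite (bigD1 j) //= [X in _ + X]big1 ?addr0.
    by rewrite !deltaE !eqxx mulr1 mul1r.
  by move=> k kj; rewrite deltaE (negbTE kj) !mul0r.
move=> k kj; rewrite big1 // => i _.
by rewrite [delta_mx j 0 k 0]deltaE (negbTE kj) mulr0.
Qed.

Lemma lformE h y : lform h y = \sum_j h j 0 * y j 0.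
Proof. by rewrite /lform mxE; apply: eq_bigr => j _; rewrite mxE. Qed.

Lemma lformD h z x t : lform h (z + t *: x) = lform h z + t * lform h x.
Proof. by rewrite /lform mulmxDr -scalemxAr mxE [in X in _ + X]mxE. Qed.

Lemma qform_rank1 h x : qform (h *m h^T) x = lform h x ^+ 2.
Proof.
rewrite /qform mulmxA -mulmxA mxE big_ord1 expr2 /lform; congr (_ * _).
transitivity ((x^T *m h)^T 0 0); first by rewrite [RHS]mxE.
by rewrite trmx_mul trmxK.
Qed.

Lemma lform_le_max h y i : nonneg_mx y -> (forall j, y j 0 <= y i 0) ->
  `|lform h y| <= (\sum_j `|h j 0|) * y i 0.
Proof.
move=> y0 ymax; rewrite lformE mulr_suml.
apply: le_trans (ler_norm_sum _ _ _) _; apply: ler_sum => j _.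
by rewrite normrM (ger0_norm (y0 j 0)) ler_wpM2l.
Qed.

Lemma cV_neq0 x : x != 0 -> exists k, x k 0 != 0.
Proof.
move=> xn0; apply/existsP; apply: contraR xn0 => /existsPn h.
by apply/eqP/matrixP => i j; rewrite ord1 mxE; move/negPn: (h i) => /eqP.
Qed.

(* Subtracting the largest multiple of a nonzero x >= 0 that keeps y >= 0;
   the multiple is the minimal ratio y_k / x_k, attained at k. *)
Lemma ratio_shift x y : nonneg_mx x -> nonneg_mx y -> x != 0 ->
  exists2 k, x k 0 != 0 & nonneg_mx (y - (y k 0 / x k 0) *: x).
Proof.
move=> x0 y0 /cV_neq0 [i0 xi0].
case: (@arg_minP _ _ _ i0 (fun k => x k 0 != 0) (fun k => y k 0 / x k 0) xi0).
move=> /= k xk kmin; exists k => // a b; rewrite ord1 !mxE subr_ge0.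
have [xa|xa] := eqVneq (x a 0) 0; first by rewrite xa mulr0 y0.
by have := kmin a xa; rewrite ler_pdivlMr // lt_def xa x0.
Qed.

Lemma ratio_shift_zero x y k : x k 0 != 0 -> (y - (y k 0 / x k 0) *: x) k 0 = 0.
Proof. by move=> xk; rewrite !mxE divfK // subrr. Qed.

End QuadraticForms.

Section CopositiveZeros.
Variables (R : realType) (n : nat) (M : 'M[R]_n).
Hypothesis cM : copositive M.
Implicit Types (u x y z : 'cV[R]_n).

Let sM : sym_mx M := cM.1.

(* If x >= 0 is a zero of M then M x >= 0: otherwise moving x slightly in
   the direction e_j with (M x)_j < 0 would make the form negative. *)
Lemma zero_Mx_ge0 x : nonneg_mx x -> qform M x = 0 -> forall j, 0 <= (M *m x) j 0.
Proof.
move=> x0 qx j; rewrite leNgt; apply/negP => aneg.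
set a := (M *m x) j 0 in aneg; set m := M j j.
set s := - a / (`|m| + 1).
have hm : 0 < `|m| + 1 by rewrite ltr_wpDl.
have s0 : 0 < s by rewrite divr_gt0 // oppr_gt0.
have nn : nonneg_mx (x + s *: delta_mx j 0).
  move=> i k; rewrite !mxE ord1 eqxx andbT; apply: addr_ge0; first exact: x0.
  by apply: mulr_ge0; [exact: ltW | case: (_ == _)].
have := cM.2 _ nn; rewrite qform_expand // qx bil_sym // bil_delta // qform_delta.
rewrite -/a -/m add0r => hq.
have sm : s * m <= s * `|m| by rewrite ler_pM2l // ler_norm.
have hs : s * (`|m| + 1) = - a by rewrite /s divfK // gt_eqF.
have h1 : s * `|m| < - a by move: hs; rewrite mulrDr mulr1; lra.
have : 0 <= s * (2 * a + s * m).
  by have -> : s * (2 * a + s * m) = 2 * s * a + s ^+ 2 * m by rewrite expr2; ring.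
rewrite pmulr_rge0 //; lra.
Qed.

Lemma zero_Mx_supp x : nonneg_mx x -> qform M x = 0 ->
  forall j, x j 0 != 0 -> (M *m x) j 0 = 0.
Proof.
move=> x0 qx j xj.
have h0 k : true -> 0 <= (M *m x) k 0 * x k 0.
  by move=> _; apply: mulr_ge0; [exact: zero_Mx_ge0 | exact: x0].
have := psumr_eq0P h0; rewrite -bilMx // -qformE qx => /(_ erefl j isT) /eqP.
by rewrite mulf_eq0 (negbTE xj) orbF => /eqP.
Qed.

Lemma qform_add_zero x z t : nonneg_mx x -> qform M x = 0 -> nonneg_mx z ->
  0 <= t -> qform M z <= qform M (z + t *: x).
Proof.
move=> x0 qx z0 t0; rewrite qform_expand // qx mulr0 addr0 lerDl.
rewrite !mulr_ge0 ?ler0n // bilMx //.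
by apply: sumr_ge0 => k _; apply: mulr_ge0; [exact: zero_Mx_ge0 | exact: z0].
Qed.

Lemma zero_descent u y : is_zero M u -> is_zero M y -> supp y \proper supp u ->
  exists2 t, 0 < t & [/\ nonneg_mx (u - t *: y), qform M (u - t *: y) = 0
                       & supp (u - t *: y) \proper supp u].
Proof.
case=> u0 [_ qu] [y0 [yn0 qy]] syu.
have yu k : y k 0 != 0 -> u k 0 != 0.
  by move=> yk; have /fintype.subsetP/(_ k) := proper_sub syu; rewrite !inE; apply.
have [k yk v0] := ratio_shift y0 u0 yn0.
have vk := ratio_shift_zero u yk.
set t := u k 0 / y k 0 in v0 vk *.
exists t; first by rewrite divr_gt0 // lt_def ?yu ?yk ?u0 ?y0.
split => //.
  rewrite -scaleNr qform_expand // qu qy mulr0 addr0 bil_sym // bilMx //.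
  rewrite big1 ?mulr0 ?addr0 // => j _.
  have [yj|yj] := eqVneq (y j 0) 0; first by rewrite yj mulr0.
  by rewrite zero_Mx_supp ?yu // mul0r.
apply/properP; split.
  apply/fintype.subsetP => j; rewrite !inE !mxE; apply: contraNneq => uj.
  have yj : y j 0 = 0 by apply/eqP; apply: contraT => /yu; rewrite uj eqxx.
  by rewrite uj yj mulr0 subrr.
by exists k; rewrite !inE ?yu // vk eqxx.
Qed.

Lemma zero_in_cone W : representative_zeros M W ->
  forall u, is_zero M u -> exists2 c : 'cV[R]_n, nonneg_mx c & u = W *m c.
Proof.
move=> [_ repu] u; move: {2}#|supp u|.+1 (ltnSn #|supp u|) => m.
elim: m u => [//|m IH] u hu zu.
have [mu|nmu] := pselect (minimal_zero M u).
  have [i [[c [c0 ->]] _]] := repu u mu.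
  exists (c *: delta_mx i 0); last by rewrite -scalemxAr -colE.
  by move=> a b; rewrite mxE ord1 deltaE mulr_ge0 ?ler0n ?ltW.
have [y [zy py]] : exists y, is_zero M y /\ supp y \proper supp u.
  by apply: contrapT => h; apply: nmu; split.
have [t t0 [v0 qv pv]] := zero_descent zu zy py.
have [cy cy0 yE] := IH y (leq_trans (proper_card py) hu) zy.
have uE : u = (u - t *: y) + t *: y by rewrite subrK.
have tcy0 : nonneg_mx (t *: cy).
  by move=> a b; rewrite mxE; apply: mulr_ge0; [exact: ltW | exact: cy0].
have [vz|vn0] := eqVneq (u - t *: y) 0.
  by exists (t *: cy) => //; rewrite uE vz add0r yE scalemxAr.
have [cv cv0 vE] := IH _ (leq_trans (proper_card pv) hu) (conj v0 (conj vn0 qv)).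
exists (cv + t *: cy); last by rewrite uE vE yE mulmxDr scalemxAr.
by move=> a b; rewrite mxE addr_ge0.
Qed.

End CopositiveZeros.

Lemma common_eps (R : realDomainType) (I : finType) (P : I -> R -> Prop) :
  (forall i e e', 0 < e' -> e' <= e -> P i e -> P i e') ->
  (forall i, exists2 e, 0 < e & P i e) -> exists2 e, 0 < e & forall i, P i e.
Proof.
move=> anti hP.
suff [e e0 He] : exists2 e, 0 < e & forall i, i \in enum I -> P i e.
  by exists e => // i; apply: He; rewrite mem_enum.
elim: (enum I) => [|i s [e1 e10 He1]]; first by exists 1.
have [e2 e20 He2] := hP i.
have em0 : 0 < Order.min e1 e2 by rewrite lt_min e10 e20.
exists (Order.min e1 e2) => // k; rewrite inE => /orP [/eqP -> | ks].
  by apply: (anti _ e2) => //; rewrite ge_min lexx orbT.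
by apply: (anti _ e1); rewrite ?ge_min ?lexx //; exact: He1.
Qed.

Section BoxMinimum.
Variables (R : realType) (n : nat) (M : 'M[R]_n).

(* The quadratic form on row vectors, written out as a polynomial so that its
   continuity is immediate. *)
Definition rqform (v : 'rV[R]_n) : R := \sum_j \sum_i v ord0 i * M i j * v ord0 j.

Lemma rqformE v : rqform v = qform M v^T.
Proof.
rewrite qformE bilE /rqform; apply: eq_bigr => j _; apply: eq_bigr => i _.
by rewrite ![v^T _ _]mxE.
Qed.

Lemma rqform_cont : continuous rqform.
Proof.
apply: (@continuous_big _ _ +%R 0 xpredT add_continuous) => j _.
apply: (@continuous_big _ _ +%R 0 xpredT add_continuous) => i _.
move=> w.
apply: (continuousM (s := fun v : 'rV[R]_n => v ord0 i * M i j)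
                    (t := fun v => v ord0 j)); last exact: coord_continuous.
apply: (continuousM (s := fun v : 'rV[R]_n => v ord0 i) (t := fun v => M i j)).
  exact: coord_continuous.
exact: cst_continuous.
Qed.

(* The coordinate ranges of the box of vectors v with v_i = 1, 0 <= v_j <= 1
   on S and v_j = 0 off S: the normalized vectors of a face whose largest
   coordinate is the i-th one. *)
Definition box (S : {set 'I_n}) (i j : 'I_n) : set R :=
  if j == i then `[1, 1]%classic
  else if j \in S then `[0, 1]%classic else `[0, 0]%classic.

Lemma boxP (S : {set 'I_n}) i j a : box S i j a ->
  if j == i then a == 1 else if j \in S then 0 <= a <= 1 else a == 0.
Proof.
rewrite /box; case: ifP => _ /=.
  by rewrite in_itv /= => /andP [h1 h2]; rewrite eq_le h1 h2.
by case: ifP => _ /=; rewrite in_itv //= => /andP [h1 h2]; rewrite eq_le h1 h2.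
Qed.

Lemma box_min (S : {set 'I_n}) i :
  exists2 c : 'rV[R]_n, (forall j, box S i j (c ord0 j)) &
    forall v : 'rV[R]_n, (forall j, box S i j (v ord0 j)) -> rqform c <= rqform v.
Proof.
pose B := [set v : 'rV[R]_n | forall j, box S i j (v ord0 j)]%classic.
have Bne : (B !=set0)%classic.
  exists (\row_j (j == i)%:R) => j /=; rewrite mxE /box.
  case: eqP => _ /=; first by rewrite in_itv /= lexx.
  by case: ifP => _ /=; rewrite in_itv /= lexx // ler01.
have Bc : compact B.
  by apply: rV_compact => j; rewrite /box; repeat case: ifP => _;
    exact: segment_compact.
have [c cB cmin] := EVT_min_rV Bne Bc (continuous_subspaceT rqform_cont).
exists c; first by move: cB; rewrite in_setE.
by move=> v vB; apply: cmin; rewrite in_setE.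
Qed.

End BoxMinimum.

Definition supported_in (R : realType) n (y : 'cV[R]_n) (S : {set 'I_n}) : Prop :=
  forall k, k \notin S -> y k 0 = 0.

Section FaceBounds.
Variables (R : realType) (n : nat) (M : 'M[R]_n) (h : 'cV[R]_n).
Hypothesis cM : copositive M.
Hypothesis h_zero : forall u, is_zero M u -> lform h u = 0.

(* On a face of R^n_+ without zeros of M, the form is bounded below by a
   positive multiple of the square of the largest coordinate, by minimizing
   it over the compact box of normalized vectors. *)
Lemma face_min_pos S i : ~ (exists x, is_zero M x /\ supported_in x S) ->
  exists2 m, 0 < m & forall y, nonneg_mx y -> supported_in y S ->
    (forall j, y j 0 <= y i 0) -> m * y i 0 ^+ 2 <= qform M y.
Proof.
move=> nz; case: (boolP (i \in S)) => iS; last first.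
  by exists 1 => // y y0 yS _; rewrite yS // expr0n mulr0; exact: cM.2.
have [c cbox cmin] := box_min M S i.
have c0 : nonneg_mx c^T.
  move=> a b; rewrite mxE ord1; have := boxP (cbox a).
  case: ifP => _; first by move=> /eqP ->.
  by case: ifP => _; [case/andP | move=> /eqP ->].
have m0 : 0 < rqform M c.
  rewrite lt_def rqformE (cM.2 _ c0) andbT; apply/eqP => q0; apply: nz.
  exists c^T; split; first split => //; first split => //.
    apply/negP => /eqP/matrixP/(_ i 0); rewrite !mxE.
    by have := boxP (cbox i); rewrite eqxx => /eqP ->; apply/eqP; rewrite oner_eq0.
  move=> k kS; rewrite mxE; have := boxP (cbox k).
  have -> : (k == i) = false by apply/negbTE; apply: contraNneq kS => ->.
  by rewrite (negbTE kS) => /eqP.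
exists (rqform M c) => // y y0 yS ymax.
set s := y i 0 in ymax *.
have [s0|sn0] := eqVneq s 0; first by rewrite s0 expr0n mulr0; exact: cM.2.
have spos : 0 < s by rewrite lt_def sn0 y0.
have ybox j : box S i j ((s^-1 *: y)^T ord0 j).
  rewrite !mxE /box; case: eqP => [->|ji] /=.
    by rewrite in_itv /= mulVf // lexx.
  case: ifP => jS /=; rewrite in_itv /=.
    apply/andP; split; first by apply: mulr_ge0; [rewrite invr_ge0 ltW | exact: y0].
    by rewrite mulrC ler_pdivrMr // mul1r; exact: ymax.
  by rewrite yS ?jS // mulr0 lexx.
have := cmin _ ybox; rewrite [rqform M (_^T)]rqformE trmxK qformZ => hmin.
have -> : qform M y = s^-1 ^+ 2 * qform M y * s ^+ 2.
  by rewrite mulrAC -exprMn mulVf // expr1n mul1r.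
by apply: ler_wpM2r => //; exact: sqr_ge0.
Qed.

Definition form_bound (e : R) (S : {set 'I_n}) : Prop :=
  forall y, nonneg_mx y -> supported_in y S -> e * lform h y ^+ 2 <= qform M y.

Lemma form_bound_anti e e' S : 0 <= e' -> e' <= e -> form_bound e S -> form_bound e' S.
Proof.
move=> e'0 le He y y0 yS; apply: le_trans (He y y0 yS).
by apply: ler_wpM2r => //; exact: sqr_ge0.
Qed.

(* Faces without zeros of M: combine the bounds of face_min_pos with the
   bound of h^T y by the largest coordinate. *)
Lemma face_bound_nozero S : ~ (exists x, is_zero M x /\ supported_in x S) ->
  exists2 e, 0 < e & form_bound e S.
Proof.
move=> nz.
have [m m0 Hm] := @common_eps _ _ (fun i m => forall y, nonneg_mx y ->
    supported_in y S -> (forall j, y j 0 <= y i 0) -> m * y i 0 ^+ 2 <= qform M y)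
  (fun i m m' m'0 le Hmi y y0 yS ymax =>
     le_trans (ler_wpM2r (sqr_ge0 _) le) (Hmi y y0 yS ymax))
  (fun i => face_min_pos i nz).
set H := \sum_j `|h j 0|.
have H0 : 0 <= H by apply: sumr_ge0.
have H1 : 0 < 1 + H by lra.
exists (m / (1 + H) ^+ 2); first by rewrite divr_gt0 // exprn_gt0.
move=> y y0 yS; have [yz|yn0] := eqVneq y 0.
  by rewrite yz /lform mulmx0 mxE expr0n mulr0; apply: cM.2; rewrite -yz.
have [k _] := cV_neq0 yn0.
case: (@arg_maxP _ _ _ k xpredT (fun j => y j 0) isT) => /= i _ imax.
have ymax j : y j 0 <= y i 0 by exact: imax.
have hb : `|lform h y| <= H * y i 0 := lform_le_max h y0 ymax.
have yi0 := y0 i 0.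
have hb2 : lform h y ^+ 2 <= (1 + H) ^+ 2 * y i 0 ^+ 2.
  have ha : `|lform h y| <= (1 + H) * y i 0 by rewrite mulrDl mul1r; lra.
  by rewrite -real_normK ?num_real // -exprMn !expr2; apply: ler_pM.
apply: le_trans (Hm i y y0 yS ymax).
have -> : m * y i 0 ^+ 2 = m / (1 + H) ^+ 2 * ((1 + H) ^+ 2 * y i 0 ^+ 2).
  by field; rewrite gt_eqF.
by apply: ler_wpM2l => //; rewrite divr_ge0 ?ltW ?exprn_gt0.
Qed.

(* Faces containing a zero x: subtracting the largest admissible multiple of x
   moves y to a smaller face without changing h^T y or increasing the form. *)
Lemma face_bound_zero x S : is_zero M x -> supported_in x S ->
  (forall i, i \in S -> exists2 e, 0 < e & form_bound e (S :\ i)) ->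
  exists2 e, 0 < e & form_bound e S.
Proof.
move=> zx xS IH.
have [e e0 He] : exists2 e, 0 < e & forall i, i \in S -> form_bound e (S :\ i).
  apply: (@common_eps _ _ (fun i e => i \in S -> form_bound e (S :\ i))).
    by move=> i e e' e'0 le Hie iS; exact: form_bound_anti (ltW e'0) le (Hie iS).
  move=> i; case: (boolP (i \in S)) => iS; last by exists 1 => // iS'; rewrite iS' in iS.
  by have [e e0 He] := IH i iS; exists e.
exists e => // y y0 yS.
case: (zx) => x0 [xn0 qx].
have [k xk z0] := ratio_shift x0 y0 xn0.
set t := y k 0 / x k 0 in z0 *.
have kS : k \in S by apply: contraT => /xS xk0; rewrite xk0 eqxx in xk.
have zS : supported_in (y - t *: x) (S :\ k).
  move=> j; rewrite in_setD1 negb_and negbK => /orP [/eqP -> | jS].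
    exact: ratio_shift_zero.
  by rewrite !mxE yS // xS // mulr0 subrr.
have t0 : 0 <= t by rewrite divr_ge0.
have yE : y = (y - t *: x) + t *: x by rewrite subrK.
rewrite yE lformD (h_zero zx) mulr0 addr0.
by apply: le_trans (He k kS _ z0 zS) _; exact: qform_add_zero.
Qed.

Lemma zero_form_bound :
  exists2 e, 0 < e & forall y, nonneg_mx y -> e * lform h y ^+ 2 <= qform M y.
Proof.
suff faces S : exists2 e, 0 < e & form_bound e S.
  by have [e e0 He] := faces [set: 'I_n]; exists e => // y y0; apply: He => // k; rewrite inE.
move: {2}#|S|.+1 (ltnSn #|S|) => m; elim: m S => [//|m IH] S hS.
have [[x [zx xS]]|nz] := pselect (exists x, is_zero M x /\ supported_in x S).
  apply: (face_bound_zero zx xS) => i iS; apply: IH.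
  by move: hS; rewrite (cardsD1 i S) iS add1n ltnS.
exact: face_bound_nozero.
Qed.

End FaceBounds.

Section RankOne.
Variables (R : realType) (n : nat).
Implicit Types (h : 'cV[R]_n) (P : 'M[R]_n).

Lemma sym_rank1 h : sym_mx (h *m h^T).
Proof. by rewrite /sym_mx trmx_mul trmxK. Qed.

Lemma psd_rank1 a h : 0 <= a -> psd (a *: (h *m h^T)).
Proof.
move=> a0; split; first by rewrite /sym_mx linearZ /= sym_rank1.
by move=> x; rewrite qformZm qform_rank1 mulr_ge0 ?sqr_ge0.
Qed.

Lemma psd_copositive P : psd P -> copositive P.
Proof. by case=> sP qP; split. Qed.

Lemma rank1_eq0 h e : 0 < e -> e *: (h *m h^T) = 0 -> h = 0.
Proof.
move=> e0 /matrixP H; apply/matrixP => i j; rewrite ord1 mxE.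
have := H i i; rewrite !mxE big_ord1 mxE.
by move/eqP; rewrite mulf_eq0 (gt_eqF e0) /= mulf_eq0 orbb => /eqP.
Qed.

End RankOne.

Lemma copositive_sub_rank1 (R : realType) n (M : 'M[R]_n) (h : 'cV[R]_n) :
  copositive M -> (forall u, is_zero M u -> lform h u = 0) ->
  exists2 e, 0 < e & copositive (M - e *: (h *m h^T)).
Proof.
move=> cM hz; have [e e0 He] := zero_form_bound cM hz.
exists e => //; split.
  by rewrite /sym_mx linearB /= linearZ /= cM.1 sym_rank1.
by move=> x x0; rewrite qformD qformN qformZm qform_rank1 subr_ge0; exact: He.
Qed.

(* The matrix of n representative minimal zeros of an exceptional extremal
   copositive matrix is invertible: a vector h in the left kernel of W would
   vanish on every zero, so M = (M - e h h^T) + e h h^T would force M to be a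
   multiple of e h h^T, hence positive semidefinite. *)
Lemma representative_zeros_unit (R : realType) n (M W : 'M[R]_n) :
  exceptional M -> extremal M -> representative_zeros M W -> W \in unitmx.
Proof.
move=> [cM notPN] [_ [_ ext]] rep.
apply: contraT; rewrite unitmxE unitfE negbK => /det0P [r rn0 rW].
set h := r^T.
have hz u : is_zero M u -> lform h u = 0.
  move=> zu; have [c _ ->] := zero_in_cone cM rep zu.
  by rewrite /lform /h trmxK mulmxA rW mul0mx mxE.
have [e e0 cM1] := copositive_sub_rank1 cM hz.
have cM2 := psd_copositive (psd_rank1 h (ltW e0)).
have [a [b [_ [b0 [_ M2E]]]]] :=
  ext _ _ cM1 cM2 (esym (subrK (e *: (h *m h^T)) M)).
have [bz|bn0] := eqVneq b 0.
  move: M2E; rewrite bz scale0r => /(rank1_eq0 e0) h0.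
  by move: rn0; rewrite -[r]trmxK -/h h0 trmx0 eqxx.
exfalso; apply: notPN; exists M, 0; split; [|split; [|split]].
- have -> : M = (b^-1 * e) *: (h *m h^T).
    by rewrite -scalerA M2E scalerA mulVf // scale1r.
  by apply: psd_rank1; apply: mulr_ge0; [rewrite invr_ge0 | exact: ltW].
- by rewrite /sym_mx trmx0.
- by move=> i j; rewrite mxE.
- by rewrite addr0.
Qed.

Lemma tr_qform (R : realType) n (M : 'M[R]_n) k (B : 'M[R]_(n, k)) :
  \tr (B *m B^T *m M) = \sum_j qform M (col j B).
Proof.
rewrite -mulmxA mxtrace_mulC /mxtrace; apply: eq_bigr => j _.
rewrite qformE bilE mxE; apply: eq_bigr => l _; rewrite mxE big_distrl.
by apply: eq_bigr => i _; rewrite !mxE.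
Qed.

(* If B >= 0 and tr(B B^T M) = 0, every column of B is a zero of M (or 0),
   hence lies in the cone spanned by the columns of W: W^-1 B >= 0. *)
Lemma zero_factor_nonneg (R : realType) n (M W : 'M[R]_n) k (B : 'M[R]_(n, k)) :
  copositive M -> representative_zeros M W -> W \in unitmx ->
  nonneg_mx B -> \tr (B *m B^T *m M) = 0 -> nonneg_mx (invmx W *m B).
Proof.
move=> cM rep Wu B0; rewrite tr_qform => tr0 i j.
have Bcol l : nonneg_mx (col l B) by move=> a b; rewrite mxE.
have qj : qform M (col j B) = 0.
  exact: (psumr_eq0P (fun l _ => cM.2 _ (Bcol l)) tr0).
have -> : (invmx W *m B) i j = (invmx W *m col j B) i 0.
  by rewrite colE mulmxA -colE [RHS]mxE.
have [cz|cn0] := eqVneq (col j B) 0; first by rewrite cz mulmx0 mxE.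
have [c c0 ->] := zero_in_cone cM rep (conj (Bcol j) (conj cn0 qj)).
by rewrite mulmxA mulVmx // mul1mx.
Qed.

Section Factors.
Variables (R : realType) (n : nat).
Implicit Types (X Y : 'M[R]_n) (F G : Defs.factor R n).

Lemma nonneg_mulmx m k p (X : 'M[R]_(m, k)) (B : 'M[R]_(k, p)) :
  nonneg_mx X -> nonneg_mx B -> nonneg_mx (X *m B).
Proof.
by move=> X0 B0 i j; rewrite mxE; apply: sumr_ge0 => l _; apply: mulr_ge0.
Qed.

Definition mul_factor X F : Defs.factor R n :=
  existT (fun k => 'M[R]_(n, k)) (projT1 F) (X *m projT2 F).

Lemma fact_eq_mul X Y F G : Y *m X = 1%:M ->
  fact_eq (mul_factor X F) (mul_factor X G) <-> fact_eq F G.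
Proof.
case: F G => [kF BF] [kG BG] YX; rewrite /fact_eq /=.
split=> -[f [bf hf]]; exists f; split => // i j; last first.
  by rewrite !mxE; apply: eq_bigr => l _; rewrite hf.
pose BGf := \matrix_(i, j) BG i (f j) : 'M[R]_(n, kF).
have XBGf : X *m BGf = X *m BF.
  by apply/matrixP => a b; rewrite -hf !mxE; apply: eq_bigr => l _; rewrite mxE.
have /matrixP/(_ i j) := congr1 (mulmx Y) XBGf.
by rewrite !mulmxA YX !mul1mx mxE.
Qed.

Lemma pairwise_lin_indep_mul k X Y (B : 'M[R]_(n, k)) : Y *m X = 1%:M ->
  pairwise_lin_indep B -> pairwise_lin_indep (X *m B).
Proof.
move=> YX ind j1 j2 jn a b H; apply: (ind j1 j2 jn a b).
have colX j : col j (X *m B) = X *m col j B by rewrite !colE mulmxA.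
have : Y *m (a *: col j1 (X *m B) + b *: col j2 (X *m B)) = 0 by rewrite H mulmx0.
by rewrite !colX !scalemxAr -mulmxDr mulmxA YX mul1mx.
Qed.

End Factors.

Section CPTransfer.
Variables (R : realType) (n : nat) (W V A C : 'M[R]_n).
Hypotheses (VW : V *m W = 1%:M) (WV : W *m V = 1%:M) (W0 : nonneg_mx W).
Hypothesis AC : A = W *m C *m W^T.
Hypothesis V_factor : forall k (B : 'M[R]_(n, k)),
  nonneg_mx B -> A = B *m B^T -> nonneg_mx (V *m B).

Lemma factor_to_C k (B : 'M[R]_(n, k)) : nonneg_mx B -> A = B *m B^T ->
  nonneg_mx (V *m B) /\ C = (V *m B) *m (V *m B)^T.
Proof.
move=> B0 AB; split; first exact: V_factor.
have -> : C = V *m A *m V^T.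
  by rewrite AC !mulmxA VW mul1mx -mulmxA -trmx_mul VW trmx1 mulmx1.
by rewrite AB trmx_mul !mulmxA.
Qed.

Lemma factor_to_A k (K : 'M[R]_(n, k)) : nonneg_mx K -> C = K *m K^T ->
  nonneg_mx (W *m K) /\ A = (W *m K) *m (W *m K)^T.
Proof. by move=> K0 CK; split; [exact: nonneg_mulmx | rewrite AC CK trmx_mul !mulmxA]. Qed.

Lemma cp_rank_transfer r : is_cp_rank A r <-> is_cp_rank C r.
Proof.
split=> [[[B [B0 AB]] rmin] | [[K [K0 CK]] rmin]].
  split; first by exists (V *m B); apply: factor_to_C.
  by move=> k K K0 CK; have [] := factor_to_A K0 CK; exact: rmin.
split; first by exists (W *m K); apply: factor_to_A.
by move=> k B B0 AB; have [] := factor_to_C B0 AB; exact: rmin.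
Qed.

Lemma cp_fact_map F : cp_fact A F -> cp_fact C (mul_factor V F).
Proof.
case: F => k B [B0 [ind AB]]; have [VB0 CVB] := factor_to_C B0 AB.
by split; [|split] => //; exact: pairwise_lin_indep_mul WV ind.
Qed.

Lemma cp_fact_lift G : cp_fact C G ->
  cp_fact A (mul_factor W G) /\ fact_eq (mul_factor V (mul_factor W G)) G.
Proof.
case: G => k K [K0 [ind CK]]; have [WK0 AWK] := factor_to_A K0 CK.
split; first by split; [|split] => //; exact: pairwise_lin_indep_mul VW ind.
exists id; split; first by exists id.
by move=> i j; rewrite /= mulmxA VW mul1mx.
Qed.

Lemma cp_fact_transfer : same_number (cp_fact A) (cp_fact C).
Proof.
exists (mul_factor V); split; first exact: cp_fact_map.
split; first by move=> F G _ _; exact: fact_eq_mul WV.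
by move=> G /cp_fact_lift [cA eG]; exists (mul_factor W G).
Qed.

Lemma min_cp_fact_transfer : same_number (min_cp_fact A) (min_cp_fact C).
Proof.
exists (mul_factor V); split.
  by move=> F [cF rF]; split; [exact: cp_fact_map | exact/cp_rank_transfer].
split; first by move=> F G _ _; exact: fact_eq_mul WV.
move=> G [cG rG]; have [cA eG] := cp_fact_lift cG.
by exists (mul_factor W G); split => //; split => //; exact/cp_rank_transfer.
Qed.

End CPTransfer.

Unset Implicit Arguments.

Theorem lemma4p5 (R : realType) (n : nat) (M W : 'M[R]_n) :
  exceptional M -> extremal M -> representative_zeros M W ->
  forall A : 'M[R]_n, completely_positive A -> \tr (A *m M) = 0 ->
  exists C : 'M[R]_n,
    [/\ completely_positive C,
        A = W *m C *m W^T,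
        (forall r, is_cp_rank A r <-> is_cp_rank C r),
        same_number (cp_fact A) (cp_fact C)
      & same_number (min_cp_fact A) (min_cp_fact C)].
Proof.
move=> exM extM rep A [k [B [B0 AB]]] trAM.
have Wu := representative_zeros_unit exM extM rep.
set V := invmx W.
have VW : V *m W = 1%:M := mulVmx Wu.
have WV : W *m V = 1%:M := mulmxV Wu.
have W0 : nonneg_mx W by move=> i j; have := (rep.1 j).1.1 i 0; rewrite mxE.
have V_factor k' (B' : 'M[R]_(n, k')) :
    nonneg_mx B' -> A = B' *m B'^T -> nonneg_mx (V *m B').
  by move=> B'0 AB'; apply: (zero_factor_nonneg exM.1 rep Wu B'0); rewrite -AB'.
set C := V *m A *m V^T.
have AC : A = W *m C *m W^T.
  by rewrite /C !mulmxA WV mul1mx -mulmxA -trmx_mul WV trmx1 mulmx1.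
exists C; split.
- have [VB0 CVB] := factor_to_C VW AC V_factor B0 AB.
  by exists k, (V *m B).
- exact: AC.
- exact: cp_rank_transfer VW W0 AC V_factor.
- exact: cp_fact_transfer VW WV W0 AC V_factor.
- exact: min_cp_fact_transfer VW WV W0 AC V_factor.
Qed.
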